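(* Let $\mathbf{A}\in\mathbb{R}^{m\times n}$ with $\|\mathbf{A}\|_\infty\le1$, $b\in\mathbb{R}^n$, $c\in\mathbb{R}^m$, $\mu>0$, $\epsilon\in[0,2]$ and $\tau>0$. Let $S_\tau=\{i\in[m]: c_i\ge\min_{i'\in[m]}c_{i'}+\tau\}$ and $\mathcal{X}'=\{x\in\Delta^m: x_i=0\text{ for all }i\in S_\tau\}$. Then $$\min_{x\in\mathcal{X}'}\max_{y\in[0,1]^n}f_{\mu,\epsilon}(x,y)\le\min_{x\in\Delta^m}\max_{y\in[0,1]^n}f_{\mu,\epsilon}(x,y)+\mu m\exp\Big(-\frac{\tau-3}{\mu}\Big).$$
   Context: $f_{\mu,\epsilon}(x,y)=x^\top\mathbf{A}y+c^\top x-b^\top y+\mu\sum_i x_i\log x_i-\frac\epsilon2 x^\top|\mathbf{A}|(y\circ y)$ on $\Delta^m\times[0,1]^n$, with $0\log0=0$; $|\mathbf{A}|$ is entrywise absolute value, $y\circ y$ entrywise square, $\|\mathbf{A}\|_\infty=\max_i\sum_j|\mathbf{A}_{ij}|$, $\Delta^m$ the probability simplex. *)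

From HB Require Import structures.
From mathcomp Require Import all_boot all_order all_algebra.
From mathcomp Require Import all_classical all_reals.
From mathcomp Require Import sequences exp.
Set Implicit Arguments. Unset Strict Implicit. Unset Printing Implicit Defensive.
Import Order.TTheory GRing.Theory Num.Theory.
Local Open Scope ring_scope.
Local Open Scope classical_set_scope.

Section Defs.
Variable R : realType.
Variables m n : nat.

Definition xlogx (t : R) : R := if t == 0 then 0 else t * ln t.

Definition mx_inf_norm (A : 'M[R]_(m, n)) : R :=
  \big[Num.max/0]_(i < m) \sum_(j < n) `|A i j|.

Definition f_mu_eps (A : 'M[R]_(m, n)) (b : 'I_n -> R) (c : 'I_m -> R)
    (mu eps : R) (x : 'I_m -> R) (y : 'I_n -> R) : R :=
  \sum_(i < m) \sum_(j < n) x i * A i j * y j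
  + \sum_(i < m) c i * x i
  - \sum_(j < n) b j * y j
  + mu * \sum_(i < m) xlogx (x i)
  - eps / 2 * \sum_(i < m) \sum_(j < n) x i * `|A i j| * (y j ^+ 2).

Definition simplex : set ('I_m -> R) :=
  [set x | (forall i, 0 <= x i) /\ \sum_(i < m) x i = 1].

Definition box01 : set ('I_n -> R) := [set y | forall j, 0 <= y j <= 1].

Definition cmin (c : 'I_m -> R) : R := inf (range c).

Definition S_tau (c : 'I_m -> R) (tau : R) : set 'I_m :=
  [set i | cmin c + tau <= c i].

Definition Xprime (c : 'I_m -> R) (tau : R) : set ('I_m -> R) :=
  [set x | simplex x /\ forall i, S_tau c tau i -> x i = 0].

(* max_{y in [0,1]^n} f(x,y) (attained: continuous on compact) *)
Definition maxf A b c mu eps (x : 'I_m -> R) : R :=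
  sup [set f_mu_eps A b c mu eps x y | y in box01].

(* min_{x in X} max_y f(x,y) (attained: continuous on compact) *)
Definition minmax A b c mu eps (X : set ('I_m -> R)) : R :=
  inf [set maxf A b c mu eps x | x in X].

End Defs.

From HB Require Import structures.
From mathcomp Require Import all_boot all_order all_algebra.
From mathcomp Require Import all_classical all_reals.
From mathcomp Require Import sequences exp.
From mathcomp Require Import ring lra.
Import Order.TTheory GRing.Theory Num.Theory.
Local Open Scope ring_scope.

(* Given x in the simplex, move all the mass it puts on the rows i with
   c_i >= c_i0 + tau onto a cheapest row i0; this lands in X'.  Since
   ||A||_oo <= 1 and eps <= 2, the cost of row i against any y lies in
   [c_i - 2, c_i + 1], so every unit of mass moved saves at least tau - 3,
   while the entropy term grows by at most mu per unit received by i0 and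
   loses -mu x_i log x_i on each emptied row.  The Fenchel bound
   t (k + mu) - mu t log t <= mu exp (k / mu) caps the net change of each
   emptied row by mu exp (-(tau - 3) / mu), whence the m mu exp(...) term. *)

Section XLogX.
Context {R : realType}.
Implicit Types t s k mu : R.

Lemma xlogx0 : xlogx (0 : R) = 0.
Proof. by rewrite /xlogx eqxx. Qed.

Lemma xlogx_gt0 t : 0 < t -> xlogx t = t * ln t.
Proof. by move=> t_gt0; rewrite /xlogx gt_eqF. Qed.

Lemma xlogx_le0 t : 0 <= t <= 1 -> xlogx t <= 0.
Proof.
move=> /andP[t_ge0 t_le1]; rewrite /xlogx; case: ifP => // _.
by rewrite mulr_ge0_le0 // ln_le0.
Qed.

Lemma xlogx_ge_subr1 t : 0 <= t -> t - 1 <= xlogx t.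
Proof.
rewrite le_eqVlt => /orP[/eqP<-|t_gt0]; first by rewrite xlogx0; lra.
rewrite xlogx_gt0 //.
have := expR_ge1Dx (- ln t); rewrite expRN lnK ?posrE // => h.
have : t * (1 - ln t) <= t * t^-1 by rewrite ler_wpM2l // ltW.
rewrite mulfV ?gt_eqF //; lra.
Qed.

Lemma xlogxD_le t s : 0 <= t -> 0 <= s -> t + s <= 1 ->
  xlogx (t + s) - xlogx t <= s.
Proof.
rewrite le_eqVlt => /orP[/eqP<-|t_gt0] s_ge0 ts_le1.
  rewrite add0r in ts_le1 *; rewrite xlogx0 subr0.
  by have := @xlogx_le0 s; rewrite s_ge0 ts_le1 => /(_ isT); lra.
have ts_gt0 : 0 < t + s by lra.
rewrite !xlogx_gt0 //.
(* exp lies above its tangent at ln t *)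
have ln_gap : t * (1 + (ln (t + s) - ln t)) <= t + s.
  have e : expR (ln t + (ln (t + s) - ln t)) = t + s.
    by rewrite addrC subrK lnK ?posrE.
  by rewrite -{2}e expRD lnK ?posrE // ler_wpM2l ?expR_ge1Dx // ltW.
have : s * ln (t + s) <= 0 by rewrite mulr_ge0_le0 ?ln_le0.
nra.
Qed.

Lemma xlogx_fenchel mu k t : 0 < mu -> 0 <= t ->
  t * (k + mu) - mu * xlogx t <= mu * expR (k / mu).
Proof.
move=> mu_gt0; rewrite le_eqVlt => /orP[/eqP<-|t_gt0].
  by rewrite xlogx0 mul0r mulr0 subr0 mulr_ge0 ?expR_ge0 ?ltW.
rewrite xlogx_gt0 //.
have -> : t * (k + mu) - mu * (t * ln t) = mu * (t * (1 + (k / mu - ln t))).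
  by field; rewrite gt_eqF.
rewrite ler_wpM2l ?(ltW mu_gt0) //.
have e : expR (ln t + (k / mu - ln t)) = expR (k / mu) by rewrite addrC subrK.
by rewrite -e expRD lnK ?posrE // ler_wpM2l ?expR_ge1Dx // ltW.
Qed.

End XLogX.

Lemma simplex_le1 {R : realType} {m : nat} (x : 'I_m -> R) i :
  simplex x -> x i <= 1.
Proof.
move=> [x_ge0 <-]; rewrite (bigD1 i) //= lerDl.
by apply: sumr_ge0 => j _.
Qed.

Definition shift_mass {R : realType} {m : nat} (i0 : 'I_m) (P : pred 'I_m)
    (x : 'I_m -> R) i : R :=
  if P i then 0 else if i == i0 then x i + \sum_(k | P k) x k else x i.

Definition entropic_cost {R : realType} {m : nat} (v : 'I_m -> R) (mu : R)
    (x : 'I_m -> R) : R :=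
  \sum_(i < m) (x i * v i + mu * xlogx (x i)).

Section MassShift.
Context {R : realType} {m : nat} {i0 : 'I_m} {P : pred 'I_m}.
Hypothesis P_i0 : ~~ P i0.
Implicit Types x : 'I_m -> R.

Lemma simplex_shift_mass x : simplex x -> simplex (shift_mass i0 P x).
Proof.
move=> [x_ge0 x_sum1]; split.
  move=> i; rewrite /shift_mass; case: ifP => // _.
  by case: ifP => _; rewrite ?addr_ge0 ?sumr_ge0.
rewrite -x_sum1 [RHS](bigID P) /= addrC.
rewrite (eq_bigr (fun i => (if ~~ P i then x i else 0)
                       + (if i == i0 then \sum_(k | P k) x k else 0))).
  by rewrite big_split /= -!big_mkcond big_pred1_eq.
move=> i _; rewrite /shift_mass; case: eqVneq => [->|_].
  by rewrite (negbTE P_i0).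
by case: (P i); rewrite ?add0r ?addr0.
Qed.

Section Cost.
Context {c v : 'I_m -> R} {mu tau : R}.
Hypothesis mu_gt0 : 0 < mu.
Hypothesis P_costly : forall i, P i -> c i0 + tau <= c i.
Hypothesis v_bounds : forall i, c i - 2 <= v i <= c i + 1.

Lemma shift_mass_cost_term_le x i : simplex x ->
  shift_mass i0 P x i * v i + mu * xlogx (shift_mass i0 P x i)
    - (x i * v i + mu * xlogx (x i))
  <= (if P i then x i * (2 - c i) - mu * xlogx (x i) else 0)
     + (if i == i0 then (\sum_(k | P k) x k) * (c i0 + 1 + mu) else 0).
Proof.
move=> x_simplex; have x_ge0 := x_simplex.1.
rewrite /shift_mass; case: ifPn => [Pi|nPi].
  rewrite ifN; last by apply: contraNneq P_i0 => <-.
  have /andP[v_ge _] := v_bounds i.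
  have : x i * (c i - 2) <= x i * v i by rewrite ler_wpM2l.
  rewrite mul0r xlogx0; lra.
case: eqVneq => [->|_]; last by rewrite subrr addr0.
have /andP[_ v_le] := v_bounds i0.
set s := \sum_(k | P k) x k.
have s_ge0 : 0 <= s by rewrite sumr_ge0.
have x'_le1 : x i0 + s <= 1.
  have := simplex_le1 (shift_mass i0 P x) i0 (simplex_shift_mass x x_simplex).
  by rewrite /shift_mass (negbTE P_i0) eqxx.
have : mu * (xlogx (x i0 + s) - xlogx (x i0)) <= mu * s.
  by rewrite ler_wpM2l ?(ltW mu_gt0) // xlogxD_le.
have : s * v i0 <= s * (c i0 + 1) by rewrite ler_wpM2l.
lra.
Qed.

Lemma entropic_cost_shift_mass x : simplex x ->
  entropic_cost v mu (shift_mass i0 P x)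
    <= entropic_cost v mu x + mu * m%:R * expR (- ((tau - 3) / mu)).
Proof.
move=> x_simplex; rewrite -lerBlDl /entropic_cost -sumrB.
set e := mu * expR (- ((tau - 3) / mu)).
apply: le_trans (ler_sum _ (fun i _ => shift_mass_cost_term_le x i x_simplex)) _.
rewrite big_split /= -!big_mkcond big_pred1_eq mulr_suml -big_split /=.
have row_le : forall i, P i ->
    x i * (2 - c i) - mu * xlogx (x i) + x i * (c i0 + 1 + mu) <= e.
  move=> i Pi; have x_ge0 := x_simplex.1 i.
  have := xlogx_fenchel _ (3 - tau) _ mu_gt0 x_ge0.
  have : 0 <= x i * (c i - (c i0 + tau)) by rewrite mulr_ge0 // subr_ge0 P_costly.
  rewrite /e; have -> : - ((tau - 3) / mu) = (3 - tau) / mu by rewrite -mulNr opprB.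
  lra.
apply: le_trans (ler_sum _ row_le) _.
have e_ge0 : 0 <= e by rewrite mulr_ge0 ?expR_ge0 ?ltW.
apply: (@le_trans _ _ (\sum_(i < m) e)).
  by rewrite [leRHS](bigID P) /= lerDl sumr_ge0.
by rewrite sumr_const cardT size_enum_ord -[_ *+ m]mulr_natr /e mulrAC.
Qed.

End Cost.
End MassShift.

Section Game.
Context {R : realType} {m n : nat}.
Variables (A : 'M[R]_(m, n)) (b : 'I_n -> R) (c : 'I_m -> R) (mu eps : R).
Implicit Types (x : 'I_m -> R) (y : 'I_n -> R).

Definition row_payoff y i : R :=
  \sum_(j < n) A i j * y j + c i - eps / 2 * \sum_(j < n) `|A i j| * y j ^+ 2.

Lemma f_mu_epsE x y : f_mu_eps A b c mu eps x y =
  entropic_cost (row_payoff y) mu x - \sum_(j < n) b j * y j.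
Proof.
rewrite /f_mu_eps /entropic_cost big_split /= -mulr_sumr.
suff -> : \sum_(i < m) x i * row_payoff y i =
    \sum_(i < m) \sum_(j < n) x i * A i j * y j + \sum_(i < m) c i * x i
    - eps / 2 * \sum_(i < m) \sum_(j < n) x i * `|A i j| * y j ^+ 2 by lra.
rewrite mulr_sumr -big_split -sumrB /=; apply: eq_bigr => i _.
rewrite /row_payoff mulrBr mulrDr [c i * _]mulrC; congr (_ + _ - _).
- by rewrite mulr_sumr; apply: eq_bigr => j _; rewrite mulrA.
- by rewrite mulrCA !mulr_sumr; apply: eq_bigr => j _; rewrite !mulrA.
Qed.

Hypothesis A_norm_le1 : mx_inf_norm A <= 1.
Hypothesis eps_range : 0 <= eps <= 2.
Hypothesis mu_gt0 : 0 < mu.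

Lemma row_payoff_bounds y i : box01 y -> c i - 2 <= row_payoff y i <= c i + 1.
Proof.
move=> y_box.
have row_le1 : \sum_(j < n) `|A i j| <= 1.
  by apply: le_trans A_norm_le1; apply: le_bigmax.
have lin_le : `|\sum_(j < n) A i j * y j| <= 1.
  apply: le_trans (ler_norm_sum _ _ _) (le_trans _ row_le1); apply: ler_sum => j _.
  have /andP[y_ge0 y_le1] := y_box j.
  by rewrite normrM (ger0_norm y_ge0) ler_piMr.
have quad_ge0 : 0 <= \sum_(j < n) `|A i j| * y j ^+ 2.
  by apply: sumr_ge0 => j _; rewrite mulr_ge0 ?sqr_ge0.
have quad_le1 : \sum_(j < n) `|A i j| * y j ^+ 2 <= 1.
  apply: le_trans row_le1; apply: ler_sum => j _.
  have /andP[y_ge0 y_le1] := y_box j.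
  by rewrite ler_piMr // expr_le1.
move: lin_le; rewrite ler_norml => /andP[lin_ge lin_le].
have /andP[eps_ge0 eps_le2] := eps_range.
have : 0 <= eps / 2 * \sum_(j < n) `|A i j| * y j ^+ 2 <= 1.
  rewrite mulr_ge0 ?divr_ge0 //= mulr_ile1 ?divr_ge0 //.
  by rewrite ler_pdivrMr // mul1r.
rewrite /row_payoff => /andP[? ?]; apply/andP; split; lra.
Qed.

Lemma f_mu_eps_ub x y : simplex x -> box01 y ->
  f_mu_eps A b c mu eps x y <= \sum_(i < m) (`|c i| + 1) + \sum_(j < n) `|b j|.
Proof.
move=> x_simplex y_box; rewrite f_mu_epsE; apply: lerD.
  apply: ler_sum => i _; have x_ge0 := x_simplex.1 i.
  have x_le1 := simplex_le1 x i x_simplex.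
  have /andP[_ v_le] := row_payoff_bounds y i y_box.
  have : mu * xlogx (x i) <= 0.
    by rewrite mulr_ge0_le0 ?(ltW mu_gt0) // xlogx_le0 // x_ge0.
  have : x i * row_payoff y i <= x i * (c i + 1) by rewrite ler_wpM2l.
  have := ler_norm (c i); have := normr_ge0 (c i).
  nra.
rewrite -sumrN; apply: ler_sum => j _; have /andP[y_ge0 y_le1] := y_box j.
by rewrite -mulNr (le_trans (ler_norm _)) // normrM (ger0_norm y_ge0) normrN ler_piMr.
Qed.

Lemma maxf_ge x y : simplex x -> box01 y ->
  f_mu_eps A b c mu eps x y <= maxf A b c mu eps x.
Proof.
move=> x_simplex y_box; apply: ub_le_sup; last by exists y.
exists (\sum_(i < m) (`|c i| + 1) + \sum_(j < n) `|b j|).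
by move=> _ [z z_box <-]; apply: f_mu_eps_ub.
Qed.

Lemma maxf_le x K : (forall y, box01 y -> f_mu_eps A b c mu eps x y <= K) ->
  maxf A b c mu eps x <= K.
Proof.
move=> f_le; apply: ge_sup; last by move=> _ [y y_box <-]; apply: f_le.
by exists (f_mu_eps A b c mu eps x (fun=> 0)), (fun=> 0) => // j; rewrite lexx ler01.
Qed.

Lemma maxf_lb x : simplex x -> \sum_(i < m) (- `|c i| - mu) <= maxf A b c mu eps x.
Proof.
move=> x_simplex; apply: le_trans (maxf_ge x (fun=> 0) x_simplex _); last first.
  by move=> j; rewrite lexx ler01.
rewrite f_mu_epsE [\sum_(j < n) _]big1 ?subr0 => [|j _]; last by rewrite mulr0.
apply: ler_sum => i _; have x_ge0 := x_simplex.1 i.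
have x_le1 := simplex_le1 x i x_simplex.
have -> : row_payoff (fun=> 0) i = c i.
  by rewrite /row_payoff !big1 ?mulr0 ?subr0 ?add0r // => j _; rewrite ?expr0n /= mulr0.
have : mu * (x i - 1) <= mu * xlogx (x i).
  by rewrite ler_wpM2l ?(ltW mu_gt0) ?xlogx_ge_subr1.
have : - `|c i| <= x i * c i.
  have := ler_norm (c i); have := lerNnormlW (lexx `|c i|); have := normr_ge0 (c i).
  nra.
have : 0 <= mu * x i by rewrite mulr_ge0 ?(ltW mu_gt0).
lra.
Qed.

Lemma has_lbound_maxf (X : set ('I_m -> R)) : (X `<=` @simplex R m)%classic ->
  has_lbound [set maxf A b c mu eps x | x in X]%classic.
Proof.
move=> X_simplex; exists (\sum_(i < m) (- `|c i| - mu)).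
by move=> _ [x /X_simplex x_simplex <-]; apply: maxf_lb.
Qed.

Lemma maxf_shift_mass_le (i0 : 'I_m) (P : pred 'I_m) (tau : R) x :
  ~~ P i0 -> (forall i, P i -> c i0 + tau <= c i) -> simplex x ->
  maxf A b c mu eps (shift_mass i0 P x)
    <= maxf A b c mu eps x + mu * m%:R * expR (- ((tau - 3) / mu)).
Proof.
move=> P_i0 P_costly x_simplex; apply: maxf_le => y y_box.
have v_bounds i := row_payoff_bounds y i y_box.
have := entropic_cost_shift_mass P_i0 mu_gt0 P_costly v_bounds x x_simplex.
have := maxf_ge x y x_simplex y_box.
rewrite !f_mu_epsE; lra.
Qed.

End Game.

Lemma inf_le_infD {R : realType} (F G : set R) (e : R) :
  has_lbound F -> (G !=set0)%classic ->
  (forall y, G y -> exists2 x, F x & x <= y + e) -> inf F <= inf G + e.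
Proof.
move=> F_lb G_n0 F_below; rewrite -lerBlDr; apply: lb_le_inf => // y Gy.
have [x Fx x_le] := F_below y Gy; rewrite lerBlDr.
exact: le_trans (ge_inf F_lb Fx) x_le.
Qed.

Lemma simplex_neq0 {R : realType} {m : nat} :
  (0 < m)%N -> (@simplex R m !=set0)%classic.
Proof.
move=> m_gt0; pose i0 := Ordinal m_gt0.
exists (fun i => (i == i0)%:R); split=> [i|]; first by rewrite ler0n.
by rewrite (bigD1 i0) //= big1 ?addr0 // => i /negbTE ->.
Qed.

Theorem mainTheorem8 (R : realType) (m n : nat) (A : 'M[R]_(m, n))
    (b : 'I_n -> R) (c : 'I_m -> R) (mu eps tau : R) :
  (0 < m)%N ->
  mx_inf_norm A <= 1 ->
  0 < mu -> 0 <= eps <= 2 -> 0 < tau ->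
  minmax A b c mu eps (Xprime c tau)
    <= minmax A b c mu eps (@simplex R m)
       + mu * m%:R * expR (- ((tau - 3) / mu)).
Proof.
move=> m_gt0 A_norm_le1 mu_gt0 eps_range tau_gt0.
have [i0 _ i0_min] := @arg_minP _ _ _ (Ordinal m_gt0) xpredT c isT.
pose P i := c i0 + tau <= c i.
have P_i0 : ~~ P i0 by rewrite /P -ltNge ltrDl.
have cmin_ge : c i0 <= cmin c.
  by apply: lb_le_inf => [|_ [i _ <-]]; [exists (c i0), i0 | exact: i0_min].
apply: inf_le_infD.
- by apply: has_lbound_maxf => // x [].
- by have [x x_simplex] := simplex_neq0 (R := R) m_gt0; exists (maxf A b c mu eps x), x.
move=> _ [x x_simplex <-]; exists (maxf A b c mu eps (shift_mass i0 P x)).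
  exists (shift_mass i0 P x) => //; split; first exact: simplex_shift_mass.
  move=> i S_i; rewrite /shift_mass ifT //.
  by apply: le_trans S_i; rewrite lerD2r.
exact: maxf_shift_mass_le.
Qed.
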